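(* Let $\langle X,<\rangle$ be an infinite linear ordering and $r$ a positive integer. Then there is $Y\subseteq X$ with $|Y|=|X|$ such that for any $y_1<y_2$ in $Y$ there are elements $x^{(k)}_1,\dots,x^{(k)}_r\in X$ for $k=1,2,3$ (at least $r$ of each) with \[x^{(1)}_1,\dots,x^{(1)}_r<y_1<x^{(2)}_1,\dots,x^{(2)}_r<y_2<x^{(3)}_1,\dots,x^{(3)}_r.\] *)

From HB Require Import structures.
From mathcomp Require Import all_boot all_order.
From mathcomp Require Import boolp classical_sets functions cardinality.
Set Implicit Arguments. Unset Strict Implicit. Unset Printing Implicit Defensive.

From HB Require Import structures.
From mathcomp Require Import all_boot all_order.
From mathcomp Require Import boolp classical_sets functions cardinality.
Set Implicit Arguments.
Unset Strict Implicit.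
Unset Printing Implicit Defensive.
Import Order.TTheory.
Local Open Scope classical_set_scope.
Local Open Scope card_scope.

(* Zorn's lemma gives a maximal set Y in which any two points a < b have at
   least r points of X strictly between them.  Every point of X is then in Y
   or too close to some y in Y, and only finitely many points are too close to
   a given y: among r + 1 of them below y, the least one has the other r
   between itself and y.  So X is a union of |Y| finite sets and |X| <= |Y|,
   using kappa * aleph_0 = kappa for infinite kappa (obtained from a maximal
   partial injection A * nat -> A, Zorn again).  Removing the endpoints of Y
   does not change its size and leaves points with neighbours in Y on both
   sides; the gaps to these neighbours supply the three blocks of r points. *)

Lemma infinite_set_injseq T (A : set T) : infinite_set A ->
  exists2 e : nat -> T, range e `<=` A & injective e.
Proof.
elim/Ppointed: T => T in A *.
  by rewrite emptyE => /(_ (finite_set0 _)).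
move=> /infiniteP /pcard_leP [e].
exists e => [_ [n _ <-]|m n]; first exact: funS.
by move=> /(inj (mem_set I) (mem_set I)).
Qed.

Lemma set_inj_card_le T U (A : set T) (B : set U) (f : T -> U) :
  set_fun A B f -> set_inj A f -> A #<= B.
Proof.
move=> fAB finj.
have /injfunPex[g] : exists2 f, set_fun A B f & set_inj A f by exists f.
exact: inj_card_le g.
Qed.

Section Absorption.
Variable T : Type.
Implicit Types (A : set T) (G : set (T * nat * T)).

Definition graph_dom G : set T := [set x | exists n y, G (x, n, y)].

(* [G] is the graph of an injection from [graph_dom G `*` [set: nat]] into
   [graph_dom G]. *)
Definition absorbing_graph G := [/\ forall p y, G (p, y) -> graph_dom G y,
  forall x, graph_dom G x -> forall n, exists y, G (x, n, y),
  forall p y y', G (p, y) -> G (p, y') -> y = y' &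
  forall p p' y, G (p, y) -> G (p', y) -> p = p'].

Lemma absorbing_graphU G1 G2 :
  absorbing_graph G1 -> absorbing_graph G2 ->
  graph_dom G1 `&` graph_dom G2 = set0 -> absorbing_graph (G1 `|` G2).
Proof.
move=> [G1r G1t G1f G1i] [G2r G2t G2f G2i] /disjoints_subset dis.
have domU1 x : graph_dom G1 x -> graph_dom (G1 `|` G2) x.
  by move=> [n [y G1y]]; exists n, y; left.
have domU2 x : graph_dom G2 x -> graph_dom (G1 `|` G2) x.
  by move=> [n [y G2y]]; exists n, y; right.
have dom_in p y (G : set (T * nat * T)) : G (p, y) -> graph_dom G p.1.
  by case: p => x n Gy; exists n, y.
split.
- by move=> p y [/G1r/domU1|/G2r/domU2].
- move=> x [n [y [G1y|G2y]]] m.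
    by have [z Gz] := G1t x (ex_intro _ n (ex_intro _ y G1y)) m; exists z; left.
  by have [z Gz] := G2t x (ex_intro _ n (ex_intro _ y G2y)) m; exists z; right.
- move=> p y y' [G1y|G2y] [G1y'|G2y'];
    [exact: G1f G1y G1y' | | | exact: G2f G2y G2y'].
  + by have := dis _ (dom_in _ _ _ G1y); move/(_ (dom_in _ _ _ G2y')).
  + by have := dis _ (dom_in _ _ _ G1y'); move/(_ (dom_in _ _ _ G2y)).
- move=> p p' y [G1y|G2y] [G1y'|G2y'];
    [exact: G1i G1y G1y' | | | exact: G2i G2y G2y'].
  + by have := dis _ (G1r _ _ G1y); move/(_ (G2r _ _ G2y')).
  + by have := dis _ (G1r _ _ G1y'); move/(_ (G2r _ _ G2y)).
Qed.

Lemma absorbing_graph_bigcup (F : set (set (T * nat * T))) :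
  (forall G, F G -> absorbing_graph G) -> total_on F subset ->
  absorbing_graph (\bigcup_(G in F) G).
Proof.
move=> Fabs Ftot.
have common t t' : (\bigcup_(G in F) G) t -> (\bigcup_(G in F) G) t' ->
    exists G, [/\ F G, G t & G t'].
  move=> [G FG Gt] [G' FG' G't']; have [GG'|G'G] := Ftot _ _ FG FG'.
    by exists G'; split=> //; exact: GG'.
  by exists G; split=> //; exact: G'G.
split.
- move=> p y [G FG Gy]; have [Gr _ _ _] := Fabs G FG.
  by have [n [z Gz]] := Gr _ _ Gy; exists n, z, G.
- move=> x [n [y [G FG Gy]]] m; have [_ Gt _ _] := Fabs G FG.
  by have [z Gz] := Gt x (ex_intro _ n (ex_intro _ y Gy)) m; exists z, G.
- move=> p y y' Uy Uy'; have [G [FG Gy Gy']] := common _ _ Uy Uy'.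
  by have [_ _ Gf _] := Fabs G FG; exact: Gf Gy Gy'.
- move=> p p' y Uy Uy'; have [G [FG Gy Gy']] := common _ _ Uy Uy'.
  by have [_ _ _ Gi] := Fabs G FG; exact: Gi Gy Gy'.
Qed.

Definition seq_graph (e : nat -> T) : set (T * nat * T) :=
  [set t | exists i n, t = (e i, n, e (pickle (i, n)))].

Lemma graph_dom_seq_graph e : graph_dom (seq_graph e) = range e.
Proof.
apply/seteqP; split=> [x [n [y [i [m [-> _ _]]]]]|_ [i _ <-]].
  exact: imageT.
by exists 0, (e (pickle (i, 0))), i, 0.
Qed.

Lemma absorbing_seq_graph e : injective e -> absorbing_graph (seq_graph e).
Proof.
move=> einj; have pickle_inj := pcan_inj (@pickleK (nat * nat)%type).
rewrite /absorbing_graph graph_dom_seq_graph; split.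
- by move=> p y [i [n [_ ->]]]; exact: imageT.
- by move=> _ [i _ <-] n; exists (e (pickle (i, n))), i, n.
- by move=> p y y' [i [n [-> ->]]] [i' [n' [/einj <- ->]]].
- move=> p p' y [i [n [-> ->]]] [i' [n' [-> /einj /pickle_inj]]].
  by case=> <- <-.
Qed.

Lemma maximal_absorbing_graph A : infinite_set A ->
  exists G, [/\ absorbing_graph G, graph_dom G `<=` A &
                finite_set (A `\` graph_dom G)].
Proof.
move=> Ainf.
have [G [[Gabs GA] Gmax]] : exists G, (absorbing_graph G /\ graph_dom G `<=` A)
    /\ forall G', G `<` G' -> ~ (absorbing_graph G' /\ graph_dom G' `<=` A).
  apply: Zorn_bigcup => F FP Ftot; split.
    by apply: absorbing_graph_bigcup Ftot => G /FP [].
  by move=> x [n [y [G FG Gy]]]; apply: (FP G FG).2; exists n, y.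
exists G; split=> //; apply: contrapT => /infinite_set_injseq [e eA einj].
have eG : range e `&` graph_dom G = set0.
  by apply/disjoints_subset => x /eA [].
apply: (Gmax (G `|` seq_graph e)); last split.
- split=> [t Gt|GeG]; first by left.
  have [_ Ge0] := eA _ (imageT e 0); apply: Ge0; exists 0, (e (pickle (0, 0))).
  by apply: GeG; right; exists 0, 0.
- apply: absorbing_graphU => //; first exact: absorbing_seq_graph.
  by rewrite graph_dom_seq_graph setIC.
- move=> x [n [y [Gy|ey]]]; first by apply: GA; exists n, y.
  have : range e x by rewrite -graph_dom_seq_graph; exists n, y.
  by move=> /eA [].
Qed.

Lemma absorbing_graph_card G :
  absorbing_graph G -> graph_dom G `*` [set: nat] #<= graph_dom G.
Proof.
move=> [Gr Gt _ Gi].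
have [g gG] : {g : T * nat -> T & forall p, graph_dom G p.1 -> G (p, g p)}.
  apply: (@choice _ _ (fun (p : T * nat) y => graph_dom G p.1 -> G (p, y))).
  move=> [x n].
  by have [/Gt/(_ n)[y Gy]|] := pselect (graph_dom G x); [exists y | exists x].
apply: (@set_inj_card_le _ _ _ _ g) => [p [dp _]|p p'].
  exact: Gr (gG _ dp).
rewrite !inE => -[dp _] [dp' _] gp.
by apply: Gi (gG _ dp) _; rewrite gp; exact: gG.
Qed.

Lemma card_setUX_nat_le (S F : set T) : S !=set0 -> countable F ->
  (S `|` F) `*` [set: nat] #<= S `*` [set: nat].
Proof.
move=> [z0 Sz0] /pcard_injP [c cinj].
have pickle_inj := pcan_inj (@pickleK (nat * nat)%type).
pose f (p : T * nat) := if pselect (S p.1) then (p.1, p.2.*2)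
                        else (z0, (pickle (c p.1, p.2)).*2.+1).
apply: (@set_inj_card_le _ _ _ _ f) => [[x n] _|[x n] [x' n']].
  by rewrite /f; case: pselect.
rewrite !inE /f /= => -[Ax _] [Ax' _].
case: pselect => Sx; case: pselect => Sx' [].
- by move=> -> /double_inj ->.
- by move=> _ /(congr1 odd); rewrite /= !odd_double.
- by move=> _ /(congr1 odd); rewrite /= !odd_double.
- move=> /double_inj /pickle_inj [cx ->]; congr (_, _).
  by apply: cinj cx; rewrite inE; [case: Ax | case: Ax'].
Qed.

Lemma card_setX_nat_le A : infinite_set A -> A `*` [set: nat] #<= A.
Proof.
move=> Ainf; have [G [Gabs GA Afin]] := maximal_absorbing_graph Ainf.
have AU : A `<=` graph_dom G `|` (A `\` graph_dom G).
  by move=> x Ax; have [|] := pselect (graph_dom G x); [left | right].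
have Ginf : infinite_set (graph_dom G).
  by move=> Gfin; apply: Ainf; apply: sub_finite_set AU _; rewrite finite_setU.
apply: card_le_trans (subset_card_le (setSX (@subset_refl _ _) AU)) _.
apply: card_le_trans (card_setUX_nat_le (infinite_setN0 Ginf)
                        (finite_set_countable Afin)) _.
exact: card_le_trans (absorbing_graph_card Gabs) (subset_card_le GA).
Qed.

End Absorption.

Lemma card_bigcup_le I T (D : set I) (F : I -> set T) : infinite_set D ->
  (forall i, D i -> countable (F i)) -> \bigcup_(i in D) F i #<= D.
Proof.
elim/Ppointed: I => I in D F *.
  by rewrite emptyE => /(_ (finite_set0 _)).
move=> Dinf Fc; apply: card_le_trans (card_setX_nat_le Dinf).
have [idx idxP] : {idx : T -> I &
    forall x, (\bigcup_(i in D) F i) x -> D (idx x) /\ F (idx x) x}.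
  apply: (@choice _ _ (fun x i => (\bigcup_(i in D) F i) x -> D i /\ F i x)).
  move=> x; have [[i Di Fix]|] := pselect ((\bigcup_(i in D) F i) x).
    by exists i.
  by exists point.
have [c cinj] : {c : I -> T -> nat &
    forall i, D i -> {in F i &, injective (c i)}}.
  apply: (@choice _ _ (fun i c => D i -> {in F i &, injective c})) => i.
  have [/Fc/pcard_injP [c ?]|] := pselect (D i); first by exists c.
  by exists (fun=> 0).
apply: (@set_inj_card_le _ _ _ _ (fun x => (idx x, c (idx x) x))).
  by move=> x /idxP [].
move=> x y; rewrite !inE => /idxP [Dx Fx] /idxP [_ Fy] [exy].
by rewrite -exy in Fy *; apply: cinj; rewrite ?inE.
Qed.

Lemma infinite_card_le_setD T (A B : set T) :
  infinite_set A -> finite_set (A `&` B) -> A #<= A `\` B.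
Proof.
move=> Ainf ABfin.
have ADinf : infinite_set (A `\` B).
  apply: sub_infinite_set (infinite_setD Ainf ABfin).
  by move=> x [Ax nABx]; split=> // Bx; apply: nABx.
have [z [Az nBz]] := infinite_setN0 ADinf.
pose F i := [set i] `|` (A `&` B).
apply: card_le_trans (card_bigcup_le (F := F) ADinf _).
- apply: subset_card_le => x Ax; have [Bx|nBx] := pselect (B x).
    by exists z => //; right.
  by exists x => //; left.
- move=> i _; apply: finite_set_countable.
  by rewrite finite_setU; split=> //; exact: finite_set1.
Qed.

Lemma finite_set_subset1 T (A : set T) : is_subset1 A -> finite_set A.
Proof.
move=> A1; have [[a Aa]|/nonemptyPn ->] := pselect (A !=set0); last first.
  exact: finite_set0.
by apply: sub_finite_set (finite_set1 a) => b Ab; exact: A1.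
Qed.

Local Open Scope order_scope.

Definition separated d (X : orderType d) (r : nat) (a b : X) :=
  exists2 f : 'I_r -> X, injective f & forall i, a < f i < b.
Arguments separated {d X} r a b.

Lemma separated_dual d (X : orderType d) r (a b : X) :
  separated (X := X^d) r a b <-> separated r b a.
Proof.
by split=> -[f finj fab]; exists f => // i; rewrite andbC; exact: fab.
Qed.

Lemma injective_ord_argmin d (X : orderType d) r (e : 'I_r.+1 -> X) :
  injective e -> exists m, forall i, e m < e (lift m i).
Proof.
move=> einj; case: (@arg_minP _ _ _ ord0 predT e isT) => m _ em.
by exists m => i; rewrite lt_neqAle em // (inj_eq einj) neq_lift.
Qed.

Lemma finite_nonseparated_below d (X : orderType d) r (y : X) :
  finite_set [set x | x < y /\ ~ separated r x y].
Proof.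
apply: contrapT => /infinite_set_injseq [e eS einj].
have e'inj : injective (e \o val : 'I_r.+1 -> X).
  by move=> i j /einj /val_inj.
have [m em] := injective_ord_argmin e'inj.
have [_ []] := eS _ (imageT e m).
exists (e \o val \o lift m) => [i j /e'inj /lift_inj //|i].
by rewrite em; have [] := eS _ (imageT e (lift m i)).
Qed.

Lemma finite_nonseparated_above d (X : orderType d) r (y : X) :
  finite_set [set x | y < x /\ ~ separated r y x].
Proof.
apply: sub_finite_set (finite_nonseparated_below (X := X^d) r y).
by move=> x [yx nsep]; split=> // /separated_dual.
Qed.

Definition separated_set d (X : orderType d) r (Y : set X) :=
  forall a b, Y a -> Y b -> a < b -> separated r a b.

Definition unseparated d (X : orderType d) r (y : X) :=
  [set y] `|` [set x | x < y /\ ~ separated r x y]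
          `|` [set x | y < x /\ ~ separated r y x].

Lemma finite_unseparated d (X : orderType d) r (y : X) :
  finite_set (unseparated r y).
Proof.
rewrite !finite_setU; split; last exact: finite_nonseparated_above.
by split; [exact: finite_set1 | exact: finite_nonseparated_below].
Qed.

Lemma maximal_separated_set d (X : orderType d) r :
  exists2 Y : set X, separated_set r Y &
    [set: X] `<=` \bigcup_(y in Y) unseparated r y.
Proof.
have [Y [Ysep Ymax]] : exists Y : set X, separated_set r Y /\
    forall B, Y `<` B -> ~ separated_set r B.
  apply: Zorn_bigcup => F Fsep Ftot a b [A FA Aa] [B FB Bb] ab.
  have [AB|BA] := Ftot _ _ FA FB.
    exact: Fsep B FB _ _ (AB _ Aa) Bb ab.
  exact: Fsep A FA _ _ Aa (BA _ Bb) ab.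
exists Y => // x _; apply: contrapT => xfar.
have nYx : ~ Y x by move=> Yx; apply: xfar; exists x => //; do 2 left.
apply: (Ymax (Y `|` [set x])).
  by split=> [z Yz|/(_ x (or_intror erefl))//]; left.
move=> a b [Ya|->] [Yb|->] ab.
- exact: Ysep.
- by apply: contrapT => nsep; apply: xfar; exists a => //; right.
- by apply: contrapT => nsep; apply: xfar; exists b => //; left; right.
- by rewrite ltxx in ab.
Qed.

Lemma finite_setI_bounds d (X : porderType d) (Y : set X) :
  finite_set (Y `&` (lbound Y `|` ubound Y)).
Proof.
rewrite setIUr finite_setU; split; apply: finite_set_subset1.
  by move=> a b [Ya aY] [Yb bY]; apply/eqP; rewrite eq_le (aY _ Yb) (bY _ Ya).
by move=> a b [Ya Ya'] [Yb Yb']; apply/eqP; rewrite eq_le (Yb' _ Ya) (Ya' _ Yb).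
Qed.

Lemma inner_point_bounds d (X : orderType d) (Y : set X) y :
  (Y `\` (lbound Y `|` ubound Y)) y -> exists a b, [/\ Y a, Y b, a < y & y < b].
Proof.
move=> [_ /not_orP [/existsNP [a /not_implyP [Ya ya]]]].
move=> /existsNP [b /not_implyP [Yb yb]].
by exists a, b; rewrite !ltNge; split=> //; apply/negP.
Qed.

Theorem fact3p2 (d : Order.disp_t) (X : orderType d) (r : nat) :
  infinite_set [set: X] -> (0 < r)%N ->
  exists Y : set X, Y #= [set: X] /\
    forall y1 y2 : X, Y y1 -> Y y2 -> y1 < y2 ->
      exists (x1 x2 x3 : 'I_r -> X),
        [/\ injective x1, injective x2, injective x3 &
          forall i : 'I_r, [/\ x1 i < y1, y1 < x2 i, x2 i < y2 & y2 < x3 i]].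
Proof.
move=> Xinf _.
have [Y Ysep Ycover] := maximal_separated_set X r.
have Yinf : infinite_set Y.
  move=> Yfin; apply/Xinf/(sub_finite_set Ycover)/bigcup_finite => // y _.
  exact: finite_unseparated.
have XY : [set: X] #<= Y.
  apply: card_le_trans (subset_card_le Ycover) (card_bigcup_le Yinf _) => y _.
  exact/finite_set_countable/finite_unseparated.
exists (Y `\` (lbound Y `|` ubound Y)); split.
  apply/card_eqPle; split; first exact: card_leT.
  exact: card_le_trans XY (infinite_card_le_setD Yinf (finite_setI_bounds Y)).
move=> y1 y2 /[dup] Y'1 [Y1 _] /[dup] Y'2 [Y2 _] y12.
have [a [_ [Ya _ ay1 _]]] := inner_point_bounds Y'1.
have [_ [b [_ Yb _ y2b]]] := inner_point_bounds Y'2.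
have [x1 x1inj x1P] := Ysep _ _ Ya Y1 ay1.
have [x2 x2inj x2P] := Ysep _ _ Y1 Y2 y12.
have [x3 x3inj x3P] := Ysep _ _ Y2 Yb y2b.
exists x1, x2, x3; split=> // i.
by move: (x1P i) (x2P i) (x3P i) => /andP[_ ->] /andP[-> ->] /andP[-> _].
Qed.
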